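(* Suppose $\tau_L > \delta_L + 1$ and $\delta_L > 0$. Let $K = \left[ -\lambda_L^s, m_{\rm max} \right]$ for some $m_{\rm max} \ge 0$. (i) If $m_{\rm max} \le m_{\rm crit}$ then $\Psi_K$ is invariant and expanding for $A_L$ with expansion factor $\lambda_L^u$. (ii) If $m_{\rm max} \le 1$ then $\Psi_K$ is invariant and expanding for $A_L$ with expansion factor $c_L = \min \left\{ \lambda_L^u, \frac{\lambda_L^u + 1}{\sqrt{2}} \right\}$.
   Context: Let $A_L = \begin{bmatrix} \tau_L & 1 \\ -\delta_L & 0 \end{bmatrix}$ with $\tau_L > \delta_L + 1$, $\delta_L > 0$, so its eigenvalues satisfy $0 < \lambda_L^s < 1 < \lambda_L^u$. Define $m_{\rm crit} = \lambda_L^s + \frac{2 \tau_L}{(\lambda_L^u)^2 - 1}$ (which is positive); it is the unique value $m \neq -\lambda_L^s$ for which $\|A_L v\| = \lambda_L^u \|v\|$ with $v = (1, m)^T$. A set $C \subset \mathbb{R}^2$ is a cone if $tv \in C$ for all $v \in C$, $t \in \mathbb{R}$. For an interval $K \subset \mathbb{R}$, $\Psi_K = \{ t (1, m)^T \mid m \in K, t \in \mathbb{R} \}$ (the cone of vectors with slope in $K$). A cone $C$ is invariant for a $2\times 2$ matrix $A$ if $Av \in C$ for all $v \in C$, and expanding with expansion factor $c > 1$ if $\|Av\| \ge c \|v\|$ for all $v \in C$ (Euclidean norm). *)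

From Stdlib Require Import Reals Lra.
Open Scope R_scope.

Record mat2 := Mat2 { m11 : R; m12 : R; m21 : R; m22 : R }.

Definition mapply (A : mat2) (v : R * R) : R * R :=
  (m11 A * fst v + m12 A * snd v, m21 A * fst v + m22 A * snd v).

Definition norm2 (v : R * R) : R := sqrt (fst v ^ 2 + snd v ^ 2).

Definition A_L (tau delta : R) : mat2 := Mat2 tau 1 (- delta) 0.

(* eigenvalues of A_L: roots of lambda^2 - tau lambda + delta = 0 *)
Definition lam_s (tau delta : R) : R := (tau - sqrt (tau ^ 2 - 4 * delta)) / 2.
Definition lam_u (tau delta : R) : R := (tau + sqrt (tau ^ 2 - 4 * delta)) / 2.

Definition m_crit (tau delta : R) : R :=
  lam_s tau delta + 2 * tau / (lam_u tau delta ^ 2 - 1).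

Definition Psi (K : R -> Prop) : R * R -> Prop :=
  fun v => exists m t, K m /\ v = (t * 1, t * m).

Definition is_cone (C : R * R -> Prop) : Prop :=
  forall v t, C v -> C (t * fst v, t * snd v).

Definition invariant (A : mat2) (C : R * R -> Prop) : Prop :=
  forall v, C v -> C (mapply A v).

Definition expanding (A : mat2) (C : R * R -> Prop) (c : R) : Prop :=
  1 < c /\ forall v, C v -> norm2 (mapply A v) >= c * norm2 v.

(** The image of the slope [m] under [A_L] is [-delta/(tau+m)], and on [K] one
    has [tau + m >= tau - lam_s = lam_u], so the image slope lies in
    [[-lam_s, 0)]: the cone is invariant.  Expansion by [c] on the slope [m]
    means that the concave (for [c >= 1]) quadratic
    [q_c(m) = (tau+m)^2 + delta^2 - c^2 (1+m^2)] is nonnegative.  At [m = -lam_s],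
    an eigendirection, [q_c = (lam_u^2 - c^2)(1 + lam_s^2)].  For [c = lam_u] the
    other root of [q_c] is [m_crit], which gives (i); for (ii) it suffices to
    check [q_c(1) >= (lam_u+1)^2 - 2 c^2 >= 0] and use concavity. *)

From Stdlib Require Import Reals Lra.
Open Scope R_scope.

Lemma concave_quadratic_nonneg_between (a b c x y m : R) :
  a <= 0 -> x <= m <= y ->
  0 <= a * x ^ 2 + b * x + c -> 0 <= a * y ^ 2 + b * y + c ->
  0 <= a * m ^ 2 + b * m + c.
Proof.
  intros Ha [Hxm Hmy] Hx Hy.
  destruct (Req_dec x y) as [<- | Hxy].
  - replace m with x by lra. exact Hx.
  - assert (Hinterp : (y - x) * (a * m ^ 2 + b * m + c) =
      (a * x ^ 2 + b * x + c) * (y - m) + (a * y ^ 2 + b * y + c) * (m - x)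
      + (- a) * ((y - x) * (m - x) * (y - m))) by ring.
    assert (0 <= (y - x) * (m - x) * (y - m)).
    { apply Rmult_le_pos; [apply Rmult_le_pos |]; lra. }
    assert (0 <= (y - x) * (a * m ^ 2 + b * m + c)) by nra.
    assert (Hyx : 0 < y - x) by lra.
    apply (Rmult_le_reg_l (y - x)); lra.
Qed.

Lemma sqrt_le_scaled (c X Y : R) :
  0 <= c -> 0 <= Y -> c ^ 2 * Y <= X -> c * sqrt Y <= sqrt X.
Proof.
  intros Hc HY HXY.
  rewrite <- (sqrt_pow2 c Hc), <- sqrt_mult_alt by (apply pow2_ge_0).
  now apply sqrt_le_1_alt.
Qed.

Lemma Psi_invariant (A : mat2) (K : R -> Prop) :
  (forall m, K m -> exists s m', K m' /\ mapply A (1, m) = (s, s * m')) ->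
  invariant A (Psi K).
Proof.
  intros Hslope v (m & t & Hm & ->).
  destruct (Hslope m Hm) as (s & m' & Hm' & Hs).
  exists m', (t * s). split; [exact Hm' |].
  unfold mapply in *; simpl in *.
  injection Hs as Hs1 Hs2.
  f_equal.
  - rewrite <- Hs1. ring.
  - replace (t * s * m') with (t * (s * m')) by ring. rewrite <- Hs2. ring.
Qed.

Lemma Psi_expanding (A : mat2) (K : R -> Prop) (c : R) :
  1 < c ->
  (forall m, K m ->
     c ^ 2 * (1 + m ^ 2) <= fst (mapply A (1, m)) ^ 2 + snd (mapply A (1, m)) ^ 2) ->
  expanding A (Psi K) c.
Proof.
  intros Hc Hslope. split; [exact Hc |].
  intros v (m & t & Hm & ->).
  specialize (Hslope m Hm).
  unfold norm2, mapply in *; simpl in *.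
  apply Rle_ge, sqrt_le_scaled; [lra | nra |].
  assert (0 <= t ^ 2) by apply pow2_ge_0.
  replace ((m11 A * (t * 1) + m12 A * (t * m)) ^ 2
           + (m21 A * (t * 1) + m22 A * (t * m)) ^ 2)
    with (t ^ 2 * ((m11 A * 1 + m12 A * m) ^ 2 + (m21 A * 1 + m22 A * m) ^ 2))
    by ring.
  replace ((t * 1) ^ 2 + (t * m) ^ 2) with (t ^ 2 * (1 + m ^ 2)) by ring.
  nra.
Qed.

Section A_L_cones.

Variables tau delta : R.
Hypothesis Htau : tau > delta + 1.
Hypothesis Hdelta : delta > 0.

Let ls := lam_s tau delta.
Let lu := lam_u tau delta.

Lemma A_L_eigenvalues :
  ls + lu = tau /\ ls * lu = delta /\ 0 < ls /\ 1 < lu.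
Proof.
  assert (Hdisc : 0 <= tau ^ 2 - 4 * delta).
  { assert ((delta + 1) ^ 2 < tau ^ 2) by nra.
    assert (0 <= (delta - 1) ^ 2) by apply pow2_ge_0.
    nra. }
  pose proof (sqrt_pos (tau ^ 2 - 4 * delta)) as Hs0.
  pose proof (sqrt_sqrt _ Hdisc) as Hs2.
  unfold ls, lu, lam_s, lam_u.
  set (s := sqrt (tau ^ 2 - 4 * delta)) in *.
  assert (Hprod : (tau - s) / 2 * ((tau + s) / 2) = delta) by nra.
  (* [(lu - 1)(1 - ls) = tau - delta - 1 > 0] separates the eigenvalues from 1. *)
  assert (Hsep : ((tau + s) / 2 - 1) * (1 - (tau - s) / 2) = tau - delta - 1) by nra.
  assert (Hlu : 1 < (tau + s) / 2).
  { destruct (Rle_or_lt ((tau + s) / 2) 1) as [Hle |]; [| assumption].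
    assert (0 <= (1 - (tau + s) / 2) * (1 - (tau - s) / 2)) by
      (apply Rmult_le_pos; lra).
    lra. }
  repeat split; [lra | exact Hprod | nra | exact Hlu].
Qed.

Lemma A_L_invariant (m_max : R) :
  0 <= m_max -> invariant (A_L tau delta) (Psi (fun m => - ls <= m <= m_max)).
Proof.
  destruct A_L_eigenvalues as (Hsum & Hprod & _ & Hlu).
  intros Hmax. apply Psi_invariant. intros m [Hm1 Hm2].
  assert (Hpos : lu <= tau + m) by lra.
  exists (tau + m), (- (delta / (tau + m))).
  split; [split |].
  - enough (delta / (tau + m) <= ls) by lra.
    apply (Rmult_le_reg_r (tau + m)); [lra |].
    unfold Rdiv. rewrite Rmult_assoc, Rinv_l by lra. nra.
  - enough (0 < delta / (tau + m)) by lra.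
    apply Rdiv_lt_0_compat; lra.
  - unfold mapply, A_L; simpl. f_equal; [ring | field; lra].
Qed.

Lemma A_L_gap_eigendirection (c : R) :
  (tau - ls) ^ 2 + delta ^ 2 - c ^ 2 * (1 + ls ^ 2) = (lu ^ 2 - c ^ 2) * (1 + ls ^ 2).
Proof.
  destruct A_L_eigenvalues as (Hsum & Hprod & _ & _).
  rewrite <- Hsum, <- Hprod. ring.
Qed.

Lemma A_L_gap_lam_u (m : R) :
  (tau + m) ^ 2 + delta ^ 2 - lu ^ 2 * (1 + m ^ 2)
  = (lu ^ 2 - 1) * (m + ls) * (m_crit tau delta - m).
Proof.
  destruct A_L_eigenvalues as (Hsum & Hprod & _ & Hlu).
  unfold m_crit. fold ls lu.
  rewrite <- Hprod, <- Hsum. field. nra.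
Qed.

Lemma A_L_expanding_lam_u (m_max : R) :
  m_max <= m_crit tau delta ->
  expanding (A_L tau delta) (Psi (fun m => - ls <= m <= m_max)) lu.
Proof.
  destruct A_L_eigenvalues as (_ & _ & _ & Hlu).
  intros Hmax. apply Psi_expanding; [exact Hlu |].
  intros m [Hm1 Hm2]. simpl.
  pose proof (A_L_gap_lam_u m) as Hgap.
  assert (0 <= (lu ^ 2 - 1) * (m + ls) * (m_crit tau delta - m)).
  { apply Rmult_le_pos; [apply Rmult_le_pos |]; nra. }
  nra.
Qed.

Lemma A_L_expanding_le_1 (m_max c : R) :
  m_max <= 1 -> 1 < c -> c <= lu -> 2 * c ^ 2 <= (lu + 1) ^ 2 ->
  expanding (A_L tau delta) (Psi (fun m => - ls <= m <= m_max)) c.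
Proof.
  destruct A_L_eigenvalues as (Hsum & _ & Hls & Hlu).
  intros Hmax Hc1 Hclu Hc2. apply Psi_expanding; [exact Hc1 |].
  intros m [Hm1 Hm2]. simpl.
  enough (0 <= (1 - c ^ 2) * m ^ 2 + 2 * tau * m + (tau ^ 2 + delta ^ 2 - c ^ 2))
    by nra.
  apply (concave_quadratic_nonneg_between _ _ _ (- ls) 1); [nra | lra | |].
  - pose proof (A_L_gap_eigendirection c) as Hgap.
    assert (0 <= (lu ^ 2 - c ^ 2) * (1 + ls ^ 2)) by (apply Rmult_le_pos; nra).
    nra.
  - nra.
Qed.

End A_L_cones.

Lemma Rmin_div_sqrt2_bounds (l : R) :
  1 < l ->
  1 < Rmin l ((l + 1) / sqrt 2) /\ Rmin l ((l + 1) / sqrt 2) <= l /\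
  2 * Rmin l ((l + 1) / sqrt 2) ^ 2 <= (l + 1) ^ 2.
Proof.
  intros Hl.
  assert (Hs : 0 < sqrt 2) by (apply sqrt_lt_R0; lra).
  assert (Hs2 : sqrt 2 * sqrt 2 = 2) by (apply sqrt_sqrt; lra).
  assert (Hdiv : (l + 1) / sqrt 2 * sqrt 2 = l + 1) by (field; lra).
  set (c := Rmin l ((l + 1) / sqrt 2)).
  assert (Hcr : c <= (l + 1) / sqrt 2) by apply Rmin_r.
  assert (Hc1 : 1 < c) by (apply Rmin_glb_lt; nra).
  repeat split; [exact Hc1 | apply Rmin_l |].
  assert (Hcs : (c * sqrt 2) ^ 2 <= (l + 1) ^ 2) by (apply pow_incr; nra).
  replace ((c * sqrt 2) ^ 2) with (c ^ 2 * (sqrt 2 * sqrt 2)) in Hcs by ring.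
  rewrite Hs2 in Hcs.
  lra.
Qed.

Theorem lemma4p1 (tau delta m_max : R) :
  tau > delta + 1 -> delta > 0 -> 0 <= m_max ->
  let K := fun m => - lam_s tau delta <= m <= m_max in
  (m_max <= m_crit tau delta ->
     invariant (A_L tau delta) (Psi K) /\
     expanding (A_L tau delta) (Psi K) (lam_u tau delta)) /\
  (m_max <= 1 ->
     invariant (A_L tau delta) (Psi K) /\
     expanding (A_L tau delta) (Psi K)
       (Rmin (lam_u tau delta) ((lam_u tau delta + 1) / sqrt 2))).
Proof.
  intros Htau Hdelta Hmax K.
  pose proof (A_L_invariant tau delta Htau Hdelta m_max Hmax) as Hinv.
  split; intros Hbound; split; try exact Hinv.
  - exact (A_L_expanding_lam_u tau delta Htau Hdelta m_max Hbound).
  - destruct (A_L_eigenvalues tau delta Htau Hdelta) as (_ & _ & _ & Hlu).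
    destruct (Rmin_div_sqrt2_bounds _ Hlu) as (Hc1 & Hclu & Hc2).
    exact (A_L_expanding_le_1 tau delta Htau Hdelta m_max _ Hbound Hc1 Hclu Hc2).
Qed.
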